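(* Let $g,m,\ell$ be integers greater than $1$ with $g$ and $m$ odd, $\ell$ even, $m>\ell$, $\gcd(g+1,\ell)=2$ and $\gcd(m,\ell)=1$. Let $n=mg$ and $k=1+\ell g$, and let $A$ be a cyclically $k$-diagonal $n\times n$ array. Then there exists a solution to $P(A)$.
   Context: Arrays are partially filled and toroidal; $F(A)$ is the set of filled cells. $s_R(i,j)=(i,j+t)$, $s_C(i,j)=(i+t,j)$ with $t\ge1$ minimal such that the cell is filled. For $R,C\in\{-1,1\}^n$, $CN_{RC}(i,j)=s_C^{c_{j'}}(i,j')$ where $(i,j')=s_R^{r_i}(i,j)$. A solution to $P(A)$ is a pair $R,C$ such that $CN_{RC}$ is a permutation of $F(A)$ forming a single cycle of length $|F(A)|$. An $n\times n$ array is cyclically $k$-diagonal if its filled cells are exactly the $(i,j)$ with $i-j\bmod n\in\{0,\dots,k-1\}$. *)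

From mathcomp Require Import all_boot all_order all_algebra.
Set Implicit Arguments. Unset Strict Implicit. Unset Printing Implicit Defensive.
Import GRing.Theory Num.Theory.

(* Toroidal n x n arrays: a cell is a pair (row, column) in 'I_n * 'I_n.
   A partially filled array is represented by its set of filled cells F(A). *)

Section Arrays.
Variable n : nat.
Notation cell := ('I_n * 'I_n)%type.

Lemma ord_pos (j : 'I_n) : 0 < n.
Proof. exact: leq_ltn_trans (leq0n j) (ltn_ord j). Qed.

Definition addmod (j : 'I_n) (t : nat) : 'I_n :=
  Ordinal (ltn_pmod (j + t) (ord_pos j)).
Definition submod (j : 'I_n) (t : nat) : 'I_n := addmod j (n - t %% n).

Definition first_filled (F : {set cell}) (mv : nat -> cell) (x : cell) : cell :=
  let t := find (fun t => mv t.+1 \in F) (iota 0 n) in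
  if t < n then mv t.+1 else x.

Definition sR F (x : cell) := first_filled F (fun t => (x.1, addmod x.2 t)) x.
Definition sRinv F (x : cell) := first_filled F (fun t => (x.1, submod x.2 t)) x.
Definition sC F (x : cell) := first_filled F (fun t => (addmod x.1 t, x.2)) x.
Definition sCinv F (x : cell) := first_filled F (fun t => (submod x.1 t, x.2)) x.

Definition sRpow F (r : int) x :=
  if r == 1%R then sR F x else if r == (-1)%R then sRinv F x else x.
Definition sCpow F (c : int) x :=
  if c == 1%R then sC F x else if c == (-1)%R then sCinv F x else x.

Definition CN F (R C : 'I_n -> int) (x : cell) : cell :=
  let y := sRpow F (R x.1) x in sCpow F (C y.2) y.

(* (R, C) is a solution to P(A): R, C in {-1,1}^n and CN_{RC} is a
   permutation of F(A) forming a single cycle of length |F(A)| *)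
Definition is_solution (F : {set cell}) (R C : 'I_n -> int) : Prop :=
  (forall i, R i = 1%R \/ R i = (-1)%R) /\
  (forall j, C j = 1%R \/ C j = (-1)%R) /\
  {in F, forall x, CN F R C x \in F} /\
  {in F &, injective (CN F R C)} /\
  exists2 x0, x0 \in F &
    forall y, y \in F -> exists t, iter t (CN F R C) x0 = y.

Definition cyc_kdiag (k : nat) : {set cell} :=
  [set x : cell | (x.1 + n - x.2) %% n < k].

End Arrays.

From mathcomp Require Import all_boot all_order all_algebra.
From mathcomp Require Import zify.
Import GRing.Theory Num.Theory.
Set Implicit Arguments. Unset Strict Implicit. Unset Printing Implicit Defensive.

(* Index a filled cell by its column j and its offset d = i - j (mod n), with
   0 <= d < k.  Take R_i = 1 for every row and C_j = -1 exactly on the window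
   of columns j <= g.  Then s_R moves to the next column and lowers the offset
   by one (jumping n - k + 1 columns from offset 0), and the column move lowers
   the offset once more inside the window and raises it back outside.  As k is
   odd, the offset is -2N (mod k) for a level N, and CN becomes the map step:
   the column advances, and the level goes up by one exactly when the new
   column lies in the window.
   Level-0 states move by the column shift sigma j = j + (m - l) g (mod n).
   From level 1 at a window column a, the orbit winds through the window until
   the level wraps round to 0, at column tau a = a + l g (mod g + 1).  Since
   gcd(m, l) = 1, sigma cycles through the columns of each residue class mod g,
   and since gcd(g + 1, l) = 2, tau cycles through the even and through the odd
   window columns.  Chaining these cycles, (0, 0) reaches every state; as step
   is injective, CN is a single cycle on F(A). *)

Lemma modn_mulD_small M c x r : r < c -> (x * c + r) %% (M * c) = x %% M * c + r.
Proof.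
move=> rc; case: M => [|M]; first by rewrite !modn0.
rewrite {1}(divn_eq x M.+1) mulnDl -mulnA -addnA modnMDl modn_small //.
have := ltn_pmod x (ltn0Sn M); nia.
Qed.

Lemma modnSm m d : (m %% d).+1 %% d = m.+1 %% d.
Proof. by rewrite -addn1 modnDml addn1. Qed.

Lemma affine_modn_inj M a q s1 s2 : coprime M a -> s1 < M -> s2 < M ->
  (q + s1 * a) %% M = (q + s2 * a) %% M -> s1 = s2.
Proof.
move=> co; wlog le12 : s1 s2 / s1 <= s2.
  by move=> W h1 h2 e; case: (leqP s1 s2) => [|/ltnW] h; [|symmetry]; apply: W.
move=> _ h2 /eqP; rewrite eq_sym eqn_modDl eqn_mod_dvd ?leq_mul2r ?le12 ?orbT //.
rewrite -mulnBl Gauss_dvdl //; case: (posnP (s2 - s1)) => [|p /(dvdn_leq p)]; lia.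
Qed.

Lemma affine_modn_onto M a q y : coprime M a -> y < M ->
  exists2 s, s < M & (q + s * a) %% M = y.
Proof.
move=> co yM; have M_gt0 : 0 < M by lia.
pose f (s : 'I_M) : 'I_M := Ordinal (ltn_pmod (q + s * a) M_gt0).
have f_inj : injective f.
  by move=> s1 s2 /(congr1 val) /(affine_modn_inj co (ltn_ord s1) (ltn_ord s2)) /val_inj.
have /codomP [s /(congr1 val) /= e] := inj_card_onto f_inj (leqnn _) (Ordinal yM).
by exists s.
Qed.

Lemma find_iota_first (P : pred nat) N t :
  t < N -> P t -> (forall s, s < t -> ~~ P s) -> find P (iota 0 N) = t.
Proof.
move=> tN Pt before.
rewrite -(subnKC (ltnW tN)) iotaD find_cat size_iota.
have -> : has P (iota 0 t) = false.
  by apply/hasPn => s; rewrite mem_iota => /andP [_ /before].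
have Nt_gt0 : 0 < N - t by rewrite subn_gt0.
by rewrite add0n -(prednK Nt_gt0) /= Pt addn0.
Qed.

Definition reaches T (f : T -> T) p q := exists t, iter t f p = q.

Section Reaches.
Variables (T : Type) (f : T -> T).

Lemma reaches_refl p : reaches f p p. Proof. by exists 0. Qed.

Lemma reaches_trans p q r : reaches f p q -> reaches f q r -> reaches f p r.
Proof. by move=> [t1 <-] [t2 <-]; exists (t2 + t1); rewrite iterD. Qed.

Lemma reaches_step p q : f p = q -> reaches f p q.
Proof. by move=> <-; exists 1. Qed.

Lemma reaches_stepr p q r : reaches f p q -> f q = r -> reaches f p r.
Proof. by move=> pq /reaches_step; apply: reaches_trans. Qed.

End Reaches.

Lemma is_solution_of_conj n (F : {set 'I_n * 'I_n}) (R C : 'I_n -> int)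
    T (X : pred T) (enc : T -> 'I_n * 'I_n) (f : T -> T) p0 :
  (forall i, R i = 1%R \/ R i = (-1)%R) -> (forall j, C j = 1%R \/ C j = (-1)%R) ->
  {in X, forall p, f p \in X} -> {in X &, injective f} ->
  {in X, forall p, enc p \in F} -> {in X &, injective enc} ->
  (forall x, x \in F -> exists2 p, p \in X & x = enc p) ->
  {in X, forall p, CN F R C (enc p) = enc (f p)} ->
  p0 \in X -> {in X, forall p, reaches f p0 p} -> is_solution F R C.
Proof.
move=> R_sign C_sign fX f_inj encF enc_inj enc_onto CN_enc Xp0 reach.
split=> //; split=> //; split.
  by move=> _ /enc_onto [p Xp ->]; rewrite CN_enc // encF ?fX.
split.
  move=> _ _ /enc_onto [p Xp ->] /enc_onto [q Xq ->]; rewrite !CN_enc //.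
  by move/(enc_inj _ _ (fX _ Xp) (fX _ Xq))/f_inj => -> //.
exists (enc p0); first exact: encF.
have iterX t : iter t f p0 \in X by elim: t => //= t; exact: fX.
move=> _ /enc_onto [p Xp ->]; have [t <-] := reach p Xp; exists t.
by elim: t => //= t ->; exact: CN_enc.
Qed.

Section DiagonalCoordinates.
Variable n : nat.
Hypothesis n_gt0 : 0 < n.
Local Notation cell := ('I_n * 'I_n)%type.

Definition ordn x : 'I_n := Ordinal (ltn_pmod x n_gt0).

Definition dcell j d : cell := (ordn (j + d), ordn j).

Lemma dcell_offset j d : ((dcell j d).1 + n - (dcell j d).2) %% n = d %% n.
Proof.
have j_lt := ltn_pmod j n_gt0.
rewrite /= -addnBA ?(ltnW j_lt) // modnDml {1}(divn_eq j n); move: j_lt.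
set q := j %/ n * n; set r := j %% n => r_lt.
by rewrite (_ : q + r + d + (n - r) = q + (d + n)) ?modnMDl ?modnDr //; lia.
Qed.

Lemma dcell_eq j1 d1 j2 d2 :
  j1 + d1 = j2 + d2 %[mod n] -> j1 = j2 %[mod n] -> dcell j1 d1 = dcell j2 d2.
Proof. by move=> e1 e2; congr (_, _); apply: val_inj. Qed.

Lemma dcell_modl j d : dcell (j %% n) d = dcell j d.
Proof. by apply: dcell_eq; rewrite ?modnDml ?modn_mod. Qed.

Lemma dcell_modr j d1 d2 : d1 = d2 %[mod n] -> dcell j d1 = dcell j d2.
Proof. by move=> e; apply: dcell_eq; rewrite // -modnDmr e modnDmr. Qed.

Lemma dcell_inj j1 d1 j2 d2 : j1 < n -> j2 < n -> d1 < n -> d2 < n ->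
  dcell j1 d1 = dcell j2 d2 -> j1 = j2 /\ d1 = d2.
Proof.
move=> j1n j2n d1n d2n e; split.
  by have := congr1 (fun x : cell => val x.2) e; rewrite /= !modn_small.
by have := congr1 (fun x : cell => (x.1 + n - x.2) %% n) e; rewrite !dcell_offset !modn_small.
Qed.

Lemma dcellE (x : cell) : x = dcell x.2 ((x.1 + n - x.2) %% n).
Proof.
case: x => i j; congr (_, _); apply: val_inj => /=; last by rewrite modn_small.
rewrite modnDmr addnC subnK; last by have := ltn_ord j; lia.
by rewrite modnDr modn_small.
Qed.

Lemma dcell_right j d t : t <= d + n ->
  ((dcell j d).1, addmod (dcell j d).2 t) = dcell (j + t) (d + n - t).
Proof.
move=> tdn; congr (_, _); apply: val_inj; rewrite /= ?modnDml //.
by rewrite -addnA subnKC // addnA modnDr.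
Qed.

Lemma dcell_down j d t : (addmod (dcell j d).1 t, (dcell j d).2) = dcell j (d + t).
Proof. by congr (_, _); apply: val_inj; rewrite /= modnDml addnA. Qed.

Lemma dcell_up j d t : t <= n ->
  (submod (dcell j d).1 t, (dcell j d).2) = dcell j (d + n - t).
Proof.
move=> tn; congr (_, _); apply: val_inj; rewrite /= modnDml //.
case: (ltngtP t n) tn => // [tn|->] _; last by rewrite modnn subn0 addnK modnDr.
by rewrite (modn_small tn) -addnA addnBA ?(ltnW tn).
Qed.

Lemma first_filled_at (A : {set cell}) (mv : nat -> cell) x t :
  t < n -> mv t.+1 \in A -> (forall s, s < t -> mv s.+1 \notin A) ->
  first_filled A mv x = mv t.+1.
Proof.
by move=> tn At before; rewrite /first_filled (@find_iota_first (fun t => mv t.+1 \in A) _ t) ?tn.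
Qed.

Variable k : nat.
Hypothesis k_le_n : k <= n.
Local Notation F := (cyc_kdiag n k).

Lemma dcell_in j d : (dcell j d \in F) = (d %% n < k).
Proof. by rewrite inE dcell_offset. Qed.

Definition row_gap d := if d == 0 then (n - k).+1 else 1.

Lemma first_filled_decr (mv : nat -> cell) (c : nat -> nat) x d : d < k ->
  (forall t, t <= n -> mv t = dcell (c t) (d + n - t)) ->
  first_filled F mv x = mv (row_gap d).
Proof.
move=> dk mvE; rewrite /row_gap; case: eqP => [d0|/eqP d0].
  apply: first_filled_at; first lia.
    by rewrite mvE ?dcell_in ?d0 ?modn_small; lia.
  by move=> s sk; rewrite mvE ?dcell_in ?d0 ?modn_small; lia.
apply: (@first_filled_at F mv x 0) => //.
rewrite mvE // dcell_in (_ : d + n - 1 = d.-1 + n); last lia.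
by rewrite modnDr modn_small; lia.
Qed.

Lemma dcell_back j d : d < k -> dcell j (d + n - row_gap d) = dcell j ((d + k.-1) %% k).
Proof.
move=> dk; apply: dcell_modr; rewrite /row_gap; case: eqP => [->|/eqP d0].
  by rewrite !modn_small; lia.
rewrite (_ : d + k.-1 = d.-1 + k) ?modnDr ?(modn_small (_ : d.-1 < k)); try lia.
by rewrite (_ : d + n - 1 = d.-1 + n) ?modnDr //; lia.
Qed.

Lemma sR_dcell j d : d < k -> sR F (dcell j d) = dcell (j + row_gap d) ((d + k.-1) %% k).
Proof.
move=> dk; rewrite /sR (@first_filled_decr _ (fun t => j + t) _ d) // => [|t tn].
  by rewrite dcell_right ?dcell_back // /row_gap; case: eqP; lia.
by rewrite dcell_right //; lia.
Qed.

Lemma sCinv_dcell j d : d < k -> sCinv F (dcell j d) = dcell j ((d + k.-1) %% k).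
Proof.
move=> dk; rewrite /sCinv (@first_filled_decr _ (fun => j) _ d) // => [|t tn].
  by rewrite dcell_up ?dcell_back // /row_gap; case: eqP; lia.
by rewrite dcell_up.
Qed.

Lemma sC_dcell j d : d < k -> sC F (dcell j d) = dcell j (d.+1 %% k).
Proof.
move=> dk; rewrite /sC; case: (ltngtP d.+1 k) dk => // [dk|dk] _.
  rewrite (@first_filled_at F _ (dcell j d) 0); cbv beta; rewrite ?dcell_down ?addn1 //.
    by rewrite modn_small.
  by rewrite dcell_in modn_small; lia.
rewrite (@first_filled_at F _ (dcell j d) (n - k)); cbv beta; rewrite ?dcell_down; first last.
- by move=> s s_lt; rewrite dcell_down dcell_in modn_small; lia.
- by rewrite dcell_in (_ : d + (n - k).+1 = n) ?modnn; lia.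
- lia.
apply: dcell_modr; rewrite -dk modnn mod0n (_ : d + (n - d.+1).+1 = n) ?modnn //; lia.
Qed.

End DiagonalCoordinates.

Section Levels.
Variables n k g : nat.
Hypotheses (n_gt0 : 0 < n) (k_le_n : k <= n) (k_odd : odd k).
Local Notation F := (cyc_kdiag n k).
Local Notation dcell := (dcell n_gt0).
Local Notation row_gap := (row_gap n k).

Let k_gt0 : 0 < k. Proof. by case: k k_odd. Qed.

(* [k - 2] is [-2] modulo [k]. *)
Definition offset N := N * (k - 2) %% k.

Lemma coprime_sub2 : coprime k (k - 2).
Proof.
case: (ltnP k 2) => [|k_ge2]; first by case: k k_odd => [|[]].
by rewrite coprime_sym /coprime -{2}(subnK k_ge2) gcdnDl -/(coprime _ 2) coprimen2 oddB // k_odd.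
Qed.

Lemma offset_lt N : offset N < k.
Proof. exact: ltn_pmod. Qed.

Lemma offset_eq0 N : N < k -> (offset N == 0) = (N == 0).
Proof.
move=> Nk; apply/eqP/eqP => [|->]; last by rewrite /offset mul0n mod0n.
move=> e; apply: (@affine_modn_inj k (k - 2) 0 N 0 coprime_sub2 Nk k_gt0).
by rewrite !add0n mul0n mod0n.
Qed.

Lemma offset_succ N : offset (N.+1 %% k) = (offset N + k.-1 + k.-1) %% k.
Proof.
rewrite /offset modnMml -!addnA modnDml mulSnr.
case: (ltnP k 2) => [k_lt2|k_ge2].
  have -> : k - 2 = 0 by lia.
  by have -> : k.-1 = 0 by lia.
have -> : k.-1 + k.-1 = k - 2 + k by lia.
by rewrite addnA modnDr.
Qed.

Lemma offset_pred_succ N : ((offset N + k.-1) %% k).+1 %% k = offset N.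
Proof.
rewrite modnSm -addnS prednK // modnDr.
exact: modn_small (offset_lt N).
Qed.

Definition R_one : 'I_n -> int := fun=> 1%R.
Definition C_window : 'I_n -> int := fun j => if j <= g then (-1)%R else 1%R.

Definition step (p : nat * nat) : nat * nat :=
  let: (j, N) := p in
  let j' := (j + row_gap N) %% n in (j', if j' <= g then N.+1 %% k else N).

Definition enc (p : nat * nat) := dcell p.1 (offset p.2).

Lemma CN_enc p : p.2 < k -> CN F R_one C_window (enc p) = enc (step p).
Proof.
case: p => j N /= Nk; rewrite /CN /R_one /sRpow eqxx sR_dcell ?offset_lt //.
have -> : row_gap (offset N) = row_gap N by rewrite /row_gap offset_eq0.
rewrite /C_window /sCpow /enc /= dcell_modl.
case: leqP => _ /=; last by rewrite sC_dcell ?ltn_pmod // offset_pred_succ.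
by rewrite sCinv_dcell ?ltn_pmod // modnDml offset_succ.
Qed.

Definition states := [pred p : nat * nat | (p.1 < n) && (p.2 < k)].

Lemma step_states : {in states, forall p, step p \in states}.
Proof.
case=> j N /andP [_ /= Nk]; rewrite inE /= ltn_pmod //=.
by case: ifP => _; rewrite // ltn_pmod.
Qed.

Lemma succ_modn_inj N1 N2 : N1 < k -> N2 < k -> N1.+1 %% k = N2.+1 %% k -> N1 = N2.
Proof.
move=> N1k N2k /eqP; rewrite -[N1.+1]addn1 -[N2.+1]addn1 eqn_modDr !modn_small //; exact/eqP.
Qed.

Lemma step_inj : {in states &, injective step}.
Proof.
case=> j1 N1 [j2 N2] /andP [/= j1n N1k] /andP [/= j2n N2k] /=.
case=> ej; rewrite ej; case: leqP => _ eN; first have {}eN := succ_modn_inj N1k N2k eN.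
all: by subst N2; move/eqP: ej; rewrite eqn_modDr !modn_small // => /eqP ->.
Qed.

Lemma enc_states : {in states, forall p, enc p \in F}.
Proof. by case=> j N _; rewrite dcell_in modn_small ?offset_lt // (leq_trans (offset_lt N)). Qed.

Lemma enc_inj : {in states &, injective enc}.
Proof.
case=> j1 N1 [j2 N2] /andP [/= j1n N1k] /andP [/= j2n N2k].
have off_lt N : offset N < n := leq_trans (offset_lt N) k_le_n.
case/(dcell_inj j1n j2n (off_lt N1) (off_lt N2)) => -> e; congr (_, _).
by apply: (@affine_modn_inj k (k - 2) 0 N1 N2 coprime_sub2); rewrite ?add0n.
Qed.

Lemma enc_onto x : x \in F -> exists2 p, p \in states & x = enc p.
Proof.
rewrite inE => xk; have [N Nk eN] := @affine_modn_onto k (k - 2) 0 _ coprime_sub2 xk.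
exists ((x.2 : nat), N); first by rewrite inE /= ltn_ord.
by move: eN; rewrite add0n /enc /offset /= => ->; exact: dcellE.
Qed.

End Levels.

Section Reachability.
Variables g m l : nat.
Hypotheses (g_gt1 : 1 < g) (l_gt1 : 1 < l) (l_lt_m : l < m).
Hypotheses (g_odd : odd g) (l_even : ~~ odd l).
Hypotheses (gcd_gS_l : gcdn g.+1 l = 2) (gcd_m_l : gcdn m l = 1).
Local Notation n := (m * g).
Local Notation k := (1 + l * g).
Local Notation step := (step n k g).
Local Notation reaches := (reaches step).

Lemma k_lt_n : k < n. Proof. nia. Qed.
Lemma gSS_lt_k : g.+2 < k. Proof. nia. Qed.
Lemma n_gt0 : 0 < n. Proof. nia. Qed.

Definition lam := m - l.
Definition sigma j := (j + lam * g) %% n.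

Lemma step_zero j : step (j, 0) = (sigma j, if sigma j <= g then 1 else 0).
Proof.
rewrite /step /row_gap eqxx (_ : (n - k).+1 = lam * g) -/(sigma j); last by rewrite /lam; nia.
by rewrite modn_small //; have := gSS_lt_k; lia.
Qed.

Lemma step_walk j N : N != 0 -> g <= j -> j.+1 < n -> step (j, N) = (j.+1, N).
Proof. by move=> N0 gj jn; rewrite /step /row_gap (negbTE N0) addn1 modn_small // leqNgt ltnS gj. Qed.

Lemma step_wrap N : N != 0 -> step (n.-1, N) = (0, N.+1 %% k).
Proof. by move=> N0; rewrite /step /row_gap (negbTE N0) addn1 prednK ?n_gt0 // modnn. Qed.

Lemma step_window j N : N != 0 -> j < g -> step (j, N) = (j.+1, N.+1 %% k).
Proof.
move=> N0 jg; rewrite /step /row_gap (negbTE N0) addn1 modn_small ?jg //.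
by have := k_lt_n; have := gSS_lt_k; lia.
Qed.

Lemma reaches_walk j N d : N != 0 -> g <= j -> j + d < n -> reaches (j, N) (j + d, N).
Proof.
move=> N0 gj; elim: d => [|d IH] jdn; first by rewrite addn0; exact: reaches_refl.
by apply: reaches_stepr (IH _) _; rewrite ?step_walk ?addnS //; lia.
Qed.

Lemma reaches_round c N : c <= g -> N != 0 -> reaches (c, N) (c.+1 %% g.+1, N.+1 %% k).
Proof.
move=> cg N0; case: (ltngtP c g) cg => // [cg|->] _.
  by apply: reaches_step; rewrite step_window // (@modn_small c.+1).
have gn : g < n by have := k_lt_n; have := gSS_lt_k; lia.
apply: reaches_stepr (reaches_walk (d := n.-1 - g) N0 (leqnn g) _) _; first lia.
by rewrite (_ : g + (n.-1 - g) = n.-1) ?step_wrap ?modnn //; lia.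
Qed.

Lemma reaches_rounds a s : a <= g -> s < k -> reaches (a, 1) ((a + s) %% g.+1, s.+1 %% k).
Proof.
move=> ag; elim: s => [|s IH] sk.
  by rewrite addn0 !modn_small //; [exact: reaches_refl | have := gSS_lt_k; lia].
apply: reaches_trans (IH (ltnW sk)) _.
have := @reaches_round ((a + s) %% g.+1) s.+1; rewrite (modn_small sk) modnSm -addnS.
by apply; rewrite // -ltnS ltn_pmod.
Qed.

Definition tau a := (a + l * g) %% g.+1.

Lemma reaches_excursion a : a <= g -> reaches (a, 1) (tau a, 0).
Proof. by move=> ag; have := @reaches_rounds a (l * g) ag; rewrite -add1n modnn; apply; lia. Qed.

Lemma reaches_sigma_out j : g < sigma j -> reaches (j, 0) (sigma j, 0).
Proof. by move=> gs; apply: reaches_step; rewrite step_zero leqNgt gs. Qed.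

Lemma reaches_sigma_in j : sigma j <= g -> reaches (j, 0) (tau (sigma j), 0).
Proof.
by move=> sg; apply: reaches_trans (reaches_excursion sg); apply: reaches_step; rewrite step_zero sg.
Qed.

Lemma coprime_lam : coprime m lam.
Proof.
have le_lm := ltnW l_lt_m.
by rewrite /coprime /lam -{1}(subnK le_lm) gcdnC gcdnDl gcdnC -gcdnDr subnK // gcdnC gcd_m_l.
Qed.

Lemma sigma_mulD x r : r < g -> sigma (x * g + r) = (x + lam) %% m * g + r.
Proof.
by move=> rg; rewrite /sigma -modn_mulD_small // mulnDl addnAC.
Qed.

Lemma sigma_iter Q r s : Q < m -> r < g ->
  iter s sigma (Q * g + r) = (Q + s * lam) %% m * g + r.
Proof.
move=> Qm rg; elim: s => [|s IH]; first by rewrite mul0n addn0 modn_small.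
by rewrite iterS IH sigma_mulD // modnDml mulSnr addnA.
Qed.

Lemma reaches_sigma_orbit b H : 0 < H ->
  (forall s, 0 < s -> s < H -> g < iter s sigma b) -> iter H sigma b <= g ->
  (forall s, s < H -> reaches (b, 0) (iter s sigma b, 0)) /\
  reaches (b, 0) (tau (iter H sigma b), 0).
Proof.
move=> H_gt0 out back.
have before s : s < H -> reaches (b, 0) (iter s sigma b, 0).
  elim: s => [|s IH] sH; first exact: reaches_refl.
  apply: reaches_trans (IH (ltnW sH)) _; rewrite iterS.
  by apply: reaches_sigma_out; rewrite -iterS out.
split=> //; case: H H_gt0 out back before => // H _ _ back before.
by apply: reaches_trans (before H _) _; rewrite // iterS; apply: reaches_sigma_in.
Qed.

Lemma sigma_orbit_interior r : 0 < r -> r < g ->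
  (forall Q, Q < m -> reaches (r, 0) (Q * g + r, 0)) /\ reaches (r, 0) (tau r, 0).
Proof.
move=> r_gt0 rg; have m_gt0 : 0 < m by lia.
have E s : iter s sigma r = (0 + s * lam) %% m * g + r by rewrite -sigma_iter.
have [] := @reaches_sigma_orbit r m m_gt0.
- move=> s s_gt0 sm; rewrite E.
  suff : 0 < (0 + s * lam) %% m by nia.
  rewrite lt0n; apply: contraTneq s_gt0 => e.
  by rewrite (@affine_modn_inj m lam 0 s 0 coprime_lam) ?e ?mod0n.
- by rewrite E add0n modnMr mul0n add0n ltnW.
rewrite E add0n modnMr mul0n add0n => before; split=> // Q Qm.
by have [s sm <-] := affine_modn_onto 0 coprime_lam Qm; rewrite -E; exact: before.
Qed.

Lemma g_lt_mul x : 1 < x -> g < x * g.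
Proof. by move=> x_gt1; rewrite -{1}[g]mul1n ltn_pmul2r //; lia. Qed.

Lemma sigma_orbit_0 u : 0 < u -> u < m -> u * lam %% m = 1 ->
  (forall s, s < u -> reaches (0, 0) (s * lam %% m * g, 0)) /\ reaches (0, 0) (tau g, 0).
Proof.
move=> u_gt0 um hu.
have E s : iter s sigma 0 = (0 + s * lam) %% m * g + 0 by rewrite -sigma_iter //; lia.
have [] := @reaches_sigma_orbit 0 u u_gt0.
- move=> s s_gt0 su; rewrite E.
  have sm : s < m by lia.
  have x0 : (0 + s * lam) %% m != 0.
    apply: contraTneq s_gt0 => e.
    by rewrite (@affine_modn_inj m lam 0 s 0 coprime_lam) ?e ?mod0n //; lia.
  have x1 : (0 + s * lam) %% m != 1.
    apply: contraTneq su => e.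
    by rewrite (@affine_modn_inj m lam 0 s u coprime_lam) ?e ?add0n ?hu ?ltnn.
  rewrite addn0 g_lt_mul //.
  by move: x0 x1; case: (_ %% m) => [|[]].
- by rewrite E add0n hu mul1n addn0.
rewrite E add0n hu mul1n addn0 => before; split=> // s su.
by have := before s su; rewrite E addn0.
Qed.

Lemma sigma_orbit_g u : 0 < u -> u < m -> u * lam %% m = 1 ->
  (forall s, s < m - u -> reaches (g, 0) ((1 + s * lam) %% m * g, 0)) /\
  reaches (g, 0) (tau 0, 0).
Proof.
move=> u_gt0 um hu.
have E s : iter s sigma g = (1 + s * lam) %% m * g + 0.
  by rewrite -sigma_iter ?mul1n ?addn0 //; lia.
have back : (1 + (m - u) * lam) %% m = 0.
  by rewrite -{1}hu modnDml -mulnDl subnKC ?(ltnW um) // modnMr.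
have m_sub_u_gt0 : 0 < m - u by rewrite subn_gt0.
have [] := @reaches_sigma_orbit g (m - u) m_sub_u_gt0.
- move=> s s_gt0 smu; rewrite E.
  have sm : s < m by lia.
  have x0 : (1 + s * lam) %% m != 0.
    apply: contraTneq smu => e.
    by rewrite (@affine_modn_inj m lam 1 s (m - u) coprime_lam) ?e ?back ?ltnn //; lia.
  have x1 : (1 + s * lam) %% m != 1.
    apply: contraTneq s_gt0 => e.
    by rewrite (@affine_modn_inj m lam 1 s 0 coprime_lam) ?e ?addn0 ?modn_small //; lia.
  rewrite addn0 g_lt_mul //.
  by move: x0 x1; case: (_ %% m) => [|[]].
- by rewrite E back.
rewrite E back => before; split=> // s su.
by have := before s su; rewrite E addn0.
Qed.

Definition half_gS := g.+1./2.
Definition half_lg := l./2 * g.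

Lemma half_gS_double : g.+1 = half_gS * 2.
Proof. by rewrite /half_gS muln2 -[LHS]odd_double_half /= g_odd. Qed.

Lemma half_lg_double : l * g = half_lg * 2.
Proof. by rewrite /half_lg mulnAC muln2 -[in LHS](odd_double_half l) (negbTE l_even). Qed.

Lemma half_gS_gt0 : 0 < half_gS. Proof. by have := half_gS_double; case: half_gS. Qed.

Lemma coprime_half : coprime half_gS half_lg.
Proof.
rewrite /half_lg coprimeMr; apply/andP; split.
  have := gcd_gS_l; rewrite half_gS_double -[in gcdn _ l](odd_double_half l) (negbTE l_even).
  rewrite add0n -muln2 -muln_gcdl => /eqP.
  by rewrite -[X in _ == X]mul1n eqn_mul2r.
by apply: (coprime_dvdl _ (coprimeSn g)); rewrite half_gS_double dvdn_mulr.
Qed.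

Lemma tau_double x e : e < 2 -> tau (x * 2 + e) = (x + half_lg) %% half_gS * 2 + e.
Proof. by move=> e2; rewrite /tau half_lg_double half_gS_double -modn_mulD_small // mulnDl addnAC. Qed.

Lemma reaches_tau_cycle e x0 : e < 2 -> x0 < half_gS ->
  reaches (0, 0) (tau (x0 * 2 + e), 0) ->
  (forall s, 0 < s -> s < half_gS -> 0 < (x0 + s * half_lg) %% half_gS * 2 + e < g) ->
  forall x, x < half_gS -> reaches (0, 0) (x * 2 + e, 0).
Proof.
move=> e2 x0w start interior.
have cycle s : 0 < s -> s <= half_gS -> reaches (0, 0) ((x0 + s * half_lg) %% half_gS * 2 + e, 0).
  elim: s => [|s IH] // _ sw; case: (posnP s) => [->|s_gt0].
    by move: start; rewrite tau_double // mul1n.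
  apply: reaches_trans (IH s_gt0 (ltnW sw)) _.
  have /andP [v_gt0 v_lt_g] := interior s s_gt0 sw.
  have [_] := sigma_orbit_interior v_gt0 v_lt_g.
  by rewrite tau_double // modnDml mulSnr addnA.
move=> x xw; have [s sw <-] := affine_modn_onto x0 coprime_half xw.
case: (posnP s) => [->|s_gt0]; last exact: cycle (ltnW sw).
have := cycle half_gS half_gS_gt0 (leqnn half_gS).
by rewrite mul0n addn0 [half_gS * half_lg]mulnC (addnC x0) modnMDl.
Qed.

Lemma lam_inverse : exists2 u, 0 < u < m & u * lam %% m = 1.
Proof.
have [u um hu] := @affine_modn_onto m lam 0 1 coprime_lam (ltn_trans l_gt1 l_lt_m).
exists u => //; rewrite um andbT lt0n.
by apply: contra_eqN hu => /eqP ->; rewrite mul0n mod0n.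
Qed.

Lemma half_gS_pred : half_gS.-1 * 2 + 1 = g.
Proof. by have := half_gS_double; lia. Qed.

Lemma odd_window_reached x : x < half_gS -> reaches (0, 0) (x * 2 + 1, 0).
Proof.
have [u /andP [u_gt0 um] hu] := lam_inverse.
have [_ to_tau_g] := sigma_orbit_0 u_gt0 um hu.
apply: (reaches_tau_cycle (x0 := half_gS.-1)); rewrite ?half_gS_pred ?prednK ?half_gS_gt0 //.
move=> s s_gt0 sw; rewrite addn1 ltnS /=.
have : (half_gS.-1 + s * half_lg) %% half_gS != half_gS.-1.
  apply: contraTneq s_gt0 => e.
  rewrite (@affine_modn_inj half_gS half_lg half_gS.-1 s 0 coprime_half sw half_gS_gt0) //.
  by rewrite e addn0 modn_small // prednK ?half_gS_gt0.
by have := ltn_pmod (half_gS.-1 + s * half_lg) half_gS_gt0; have := half_gS_double; lia.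
Qed.

Lemma even_window_reached x : x < half_gS -> reaches (0, 0) (x * 2, 0).
Proof.
have [u /andP [u_gt0 um] hu] := lam_inverse.
have [_ to_tau_0] := sigma_orbit_g u_gt0 um hu.
rewrite -[x * 2]addn0; apply: (reaches_tau_cycle (x0 := 0)) => //; first exact: half_gS_gt0.
  apply: reaches_trans to_tau_0.
  by have := @odd_window_reached half_gS.-1; rewrite half_gS_pred prednK ?half_gS_gt0 //; apply.
move=> s s_gt0 sw; rewrite add0n addn0.
have : (s * half_lg) %% half_gS != 0.
  apply: contraTneq s_gt0 => e.
  by rewrite (@affine_modn_inj half_gS half_lg 0 s 0 coprime_half sw half_gS_gt0) // add0n e mod0n.
by have := ltn_pmod (s * half_lg) half_gS_gt0; have := half_gS_double; lia.
Qed.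

Lemma window_reached b : b <= g -> reaches (0, 0) (b, 0).
Proof.
move=> bg; rewrite -(odd_double_half b) (addnC (odd b)) -muln2.
have half_lt : b./2 < half_gS by have := half_gS_double; have := odd_double_half b; lia.
by case: (odd b); [exact: odd_window_reached | rewrite addn0; exact: even_window_reached].
Qed.

Lemma column_reached j : j < n -> reaches (0, 0) (j, 0).
Proof.
move=> jn; have g_gt0 : 0 < g by lia.
have [u /andP [u_gt0 um] hu] := lam_inverse.
have Qm : j %/ g < m by rewrite ltn_divLR.
have [s sm Qs] := affine_modn_onto 0 coprime_lam Qm.
rewrite (divn_eq j g); case: (posnP (j %% g)) => [->|r_gt0]; last first.
  apply: reaches_trans (window_reached (ltnW (ltn_pmod j g_gt0))) _.
  by have [to_col _] := sigma_orbit_interior r_gt0 (ltn_pmod j g_gt0); exact: to_col.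
rewrite addn0 -Qs add0n; case: (ltnP s u) => [su|us].
  by have [to_col _] := sigma_orbit_0 u_gt0 um hu; exact: to_col.
apply: reaches_trans (window_reached (leqnn g)) _.
have [to_col _] := sigma_orbit_g u_gt0 um hu.
have := to_col (s - u); rewrite -[X in (X + _) %% m]hu modnDml -mulnDl subnKC //; apply; lia.
Qed.

Lemma level1_reached a : a <= g -> reaches (0, 0) (a, 1).
Proof.
move=> ag; have n_pos := n_gt0; have k_n := k_lt_n; have g_k := gSS_lt_k.
have sigma_a : sigma ((a + l * g) %% n) = a.
  rewrite /sigma modnDml -addnA -mulnDl /lam subnKC ?(ltnW l_lt_m) // modnDr modn_small //; lia.
apply: reaches_stepr (column_reached (ltn_pmod (a + l * g) n_pos)) _.
by rewrite step_zero sigma_a ag.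
Qed.

Lemma right_of_g_reached N : N != 0 -> reaches (0, 0) (g, N) ->
  forall j, g <= j -> j < n -> reaches (0, 0) (j, N).
Proof.
move=> N0 to_g j gj jn; apply: reaches_trans to_g _.
by have := @reaches_walk g N (j - g) N0 (leqnn g); rewrite subnKC //; apply.
Qed.

Lemma all_reached j N : j < n -> N < k -> reaches (0, 0) (j, N).
Proof.
elim: N j => [|N IH] j jn Nk; first exact: column_reached.
have left_part : forall i, i <= g -> reaches (0, 0) (i, N.+1).
  case: (posnP N) => [-> i ig|N_gt0]; first exact: level1_reached.
  have N0 : N != 0 by rewrite -lt0n.
  have succ_N : N.+1 %% k = N.+1 by rewrite modn_small.
  case=> [|i] ig.
    apply: reaches_stepr (IH n.-1 _ _) _; rewrite ?step_wrap ?succ_N //; last lia.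
    by rewrite prednK ?n_gt0.
  apply: reaches_stepr (IH i _ _) _; rewrite ?step_window ?succ_N //; try lia.
  by have := k_lt_n; have := gSS_lt_k; lia.
case: (leqP j g) => [|gj]; first exact: left_part.
by apply: right_of_g_reached (ltnW gj) jn => //; exact: left_part.
Qed.

End Reachability.

Theorem corollary5p3 (g m l : nat) (F : {set 'I_(m * g) * 'I_(m * g)}) :
  1 < g -> 1 < m -> 1 < l ->
  odd g -> odd m -> ~~ odd l -> l < m ->
  gcdn g.+1 l = 2 -> gcdn m l = 1 ->
  F = cyc_kdiag (m * g) (1 + l * g) ->
  exists R C : 'I_(m * g) -> int, is_solution F R C.
Proof.
(* [1 < m] and [odd m] follow from [1 < l < m], [~~ odd l] and [gcdn m l = 1]. *)
move=> g_gt1 _ l_gt1 g_odd _ l_even l_lt_m gcd_gS_l gcd_m_l ->.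
have n_pos : 0 < m * g by nia.
have k_le_n : 1 + l * g <= m * g by nia.
have k_odd : odd (1 + l * g) by rewrite oddD oddM (negbTE l_even).
exists (@R_one _), (C_window g).
apply: (@is_solution_of_conj _ _ _ _ _ (states (m * g) (1 + l * g))
  (enc (1 + l * g) n_pos) (step (m * g) (1 + l * g) g) (0, 0)).
- by left.
- by move=> j; rewrite /C_window; case: ifP; [right | left].
- exact: step_states.
- exact: step_inj.
- exact: enc_states.
- exact: enc_inj.
- exact: enc_onto.
- by move=> p /andP [_ pk]; apply: CN_enc.
- by rewrite inE /= n_pos; lia.
- by move=> [j N] /andP [jn Nk]; apply: all_reached.
Qed.
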